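(* Under the setting described in the context, let $j\in J$ and let $u_j$ be an exact eigenfunction associated with $\lambda_i$. Assume $\Lambda_p\neq\lambda_i$ for all $p\notin J$. Let $W=\Pi_h u_j-\mathcal{P}_{a_h^\ell}u_j$, $\beta_p=m_h^\ell(W,U_p^\ell)$ for $p\notin J$, and $Z=\sum_{p\notin J}\frac{\lambda_i}{\Lambda_p-\lambda_i}\beta_pU_p^\ell$. Then $$\|W\|^2_{m_h^\ell}=m_h^\ell(u_j-\Pi_hu_j,Z)+(m-m_h^\ell)(u_j,Z)+\frac{1}{\lambda_i}(a_h^\ell-a)(u_j,Z),$$ $$\|W\|^2_{a_h^\ell}=\lambda_i\,m_h^\ell(u_j-\Pi_hu_j,W)+\lambda_i\|W\|^2_{m_h^\ell}+\lambda_i(m-m_h^\ell)(u_j,W)+(a_h^\ell-a)(u_j,W).$$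
   Context: Let $d\in\{2,3\}$ and $\Omega\subset\mathbb{R}^d$ a nonempty bounded connected open set with smooth boundary $\Gamma=\partial\Omega$; fix integers $r\ge1$, $k\ge1$; $\Omega$ is at least $C^{r+2}$ and $C^{k+1}$ regular. $H^1(\Omega,\Gamma)=\{u\in H^1(\Omega):u|_\Gamma\in H^1(\Gamma)\}$; $\nabla_\Gamma$ is the tangential gradient; $b(x)=x-\mathrm{d}(x)\nabla\mathrm{d}(x)$, $\mathrm{d}$ the signed distance to $\Gamma$, is the orthogonal projection onto $\Gamma$ near $\Gamma$. Continuous problem: $a(u,v)=\int_\Omega\nabla u\cdot\nabla v\,dx+\int_\Gamma\nabla_\Gamma u\cdot\nabla_\Gamma v\,ds+\int_\Gamma uv\,ds$, $m(u,v)=\int_\Omega uv\,dx$; eigenpairs $(\lambda_n,u_n)$, $a(u_n,v)=\lambda_n m(u_n,v)$ for all $v\in H^1(\Omega,\Gamma)$, eigenvalues increasing with multiplicity, $(u_n)$ $m$-orthonormal. Fix $\lambda_i$ of multiplicity $N$, $J=\{i,\dots,i+N-1\}$, $\lambda_j=\lambda_i$ for $j\in J$. Meshes and lift: $\mathcal{T}_h^{(1)}$ quasi-uniform simplicial meshes of size $h$ with boundary vertices on $\Gamma$, $T=F_T(\hat T)$ with $F_T$ affine. For $T$ with at least two vertices on $\Gamma$ (barycentric coordinates $\lambda_l$, vertices $\hat v_l$ of $\hat T$, $\varepsilon_l=1$ iff $F_T(\hat v_l)\in\Gamma$, $\lambda^*=\sum\varepsilon_l\lambda_l$, $\hat\sigma=\{\lambda^*=0\}$,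 $\hat y=\frac1{\lambda^*}\sum\varepsilon_l\lambda_l\hat v_l$): $F_T^{(e)}=F_T$ on $\hat\sigma$, $F_T^{(e)}(\hat x)=F_T(\hat x)+(\lambda^* )^{r+2}(b(F_T(\hat y))-F_T(\hat y))$ otherwise; else $F_T^{(e)}=F_T$. $F_T^{(r)}$ is the $\mathbb{P}^r$-Lagrange interpolant of $F_T^{(e)}$, $T^{(r)}=F_T^{(r)}(\hat T)$, $\Omega_h=\bigcup T^{(r)}$, $\Gamma_h=\partial\Omega_h$. $G_h:\Omega_h\to\Omega$ equals $F^{(e)}_{T^{(r)}}\circ(F_T^{(r)})^{-1}$ on $T^{(r)}$ (formula of $F_T^{(e)}$ with $F_T$ replaced by $F_T^{(r)}$); continuous, elementwise $C^1$-diffeomorphism, $G_h|_{\Gamma_h}=b$. Lift: $v^\ell\circ G_h=v$. Discrete: $\mathbb{V}_h=\{\chi\in C^0(\Omega_h):\chi|_{T^{(r)}}\circ F_T^{(r)}\in\mathbb{P}^k(\hat T)\}$, $\mathbb{V}_h^\ell$ its lifts; $a_h(U,V)=\int_{\Omega_h}\nabla U\cdot\nabla V+\int_{\Gamma_h}\nabla_{\Gamma_h}U\cdot\nabla_{\Gamma_h}V+\int_{\Gamma_h}UV$, $m_h(U,V)=\int_{\Omega_h}UV$; for $v,w\in H^1(\Omega,\Gamma)$, $a_h^\ell(v,w)=a_h(v\circ G_h,w\circ G_h)$, $m_h^\ell(v,w)=m_h(v\circ G_h,w\circ G_h)$, norms $\|v\|_{a_h^\ell}=a_h^\ell(v,v)^{1/2}$,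 $\|v\|_{m_h^\ell}=m_h^\ell(v,v)^{1/2}$. Discrete eigenpairs $(\Lambda_p,U_p)$, $p=1,\dots,\dim\mathbb{V}_h$: $a_h(U_p,V)=\Lambda_pm_h(U_p,V)$ for all $V\in\mathbb{V}_h$, $(U_p)$ $m_h$-orthonormal basis of $\mathbb{V}_h$. $\mathbb{F}_h^\ell=\mathrm{span}\{U_j^\ell:j\in J\}$. Projections on $H^1(\Omega,\Gamma)$: $\Pi_h v\in\mathbb{V}_h^\ell$ with $a_h^\ell(\Pi_hv,w)=a_h^\ell(v,w)$ for all $w\in\mathbb{V}_h^\ell$; $\mathcal{P}_{a_h^\ell}v\in\mathbb{F}_h^\ell$ with $a_h^\ell(\mathcal{P}_{a_h^\ell}v,w)=a_h^\ell(v,w)$ for all $w\in\mathbb{F}_h^\ell$; $\mathcal{P}_{m_h^\ell}v\in\mathbb{F}_h^\ell$ with $m_h^\ell(\mathcal{P}_{m_h^\ell}v,w)=m_h^\ell(v,w)$ for all $w\in\mathbb{F}_h^\ell$. *)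

(* Abstract (variational) rendering of the finite-element eigenvalue setting:
   H plays the role of H^1(Omega,Gamma); a, m are the exact forms, ah, mh the
   lifted discrete forms a_h^l, m_h^l; U : 'I_n -> H are the lifts U_p^l of the
   discrete eigenfunctions (paper index p+1 <-> ordinal p). *)
From HB Require Import structures.
From mathcomp Require Import all_boot all_order all_algebra.
From mathcomp Require Import reals.
Set Implicit Arguments. Unset Strict Implicit. Unset Printing Implicit Defensive.
Import Order.TTheory GRing.Theory Num.Theory.
Local Open Scope ring_scope.

Definition sym_bilinear (R : realType) (H : lmodType R) (f : H -> H -> R) : Prop :=
  (forall u v, f u v = f v u) /\
  (forall (c : R) u v w, f u (c *: v + w) = c * f u v + f u w).

Definition pos_def (R : realType) (H : lmodType R) (f : H -> H -> R) : Prop :=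
  forall v, v != 0 -> 0 < f v v.

Definition in_span (R : realType) (H : lmodType R) (n : nat)
    (U : 'I_n -> H) (P : pred 'I_n) (v : H) : Prop :=
  exists c : 'I_n -> R, v = \sum_(p < n | P p) c p *: U p.

Definition is_proj (R : realType) (H : lmodType R) (f : H -> H -> R)
    (S : H -> Prop) (v p : H) : Prop :=
  S p /\ forall w, S w -> f p w = f v w.

(* discrete index set J (0-based ordinal p corresponds to paper index p+1) *)
Definition Jd (n i N : nat) : pred 'I_n := fun p => (i <= p.+1 < i + N)%N.
Arguments Jd : clear implicits.

(* Let V_J be the span of the discrete eigenvectors U_p, p in J. Both Pi_h u_j
   and P u_j are a_h-Galerkin projections of u_j, onto V_h and onto V_J, so
   W = Pi_h u_j - P u_j is a_h-orthogonal to V_J; since a_h = Lambda_p m_h on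
   U_p and Lambda_p > 0, W is also m_h-orthogonal to V_J, i.e. W is a
   combination of the U_p with p outside J, with coefficients beta_p.  On that
   complement the operator of the discrete problem minus lambda_i is invertible,
   and Z is lambda_i times its inverse applied to W, whence
   a_h(W, Z) - lambda_i m_h(W, Z) = lambda_i m_h(W, W).  Both identities then
   follow by rewriting a_h(u_j, .) = a_h(Pi_h u_j, .) on V_h and
   a(u_j, .) = lambda_i m(u_j, .), using that V_J and its complement are
   orthogonal for a_h and m_h. *)
From HB Require Import structures.
From mathcomp Require Import all_boot all_order all_algebra.
From mathcomp Require Import reals.
From mathcomp Require Import ring.
Import Order.TTheory GRing.Theory Num.Theory.
Local Open Scope ring_scope.
Set Implicit Arguments.
Unset Strict Implicit.

Section SymBilinearForm.
Variables (R : realType) (H : lmodType R) (f : H -> H -> R).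
Hypothesis f_sym_bilinear : sym_bilinear f.

Lemma formC u v : f u v = f v u.
Proof. by case: f_sym_bilinear. Qed.

Lemma formDr u v w : f u (v + w) = f u v + f u w.
Proof.
by case: f_sym_bilinear => _ lin; have := lin 1 u v w; rewrite scale1r mul1r.
Qed.

Lemma form0r u : f u 0 = 0.
Proof. by apply: (@addrI _ (f u 0)); rewrite addr0 -formDr addr0. Qed.

Lemma formZr c u v : f u (c *: v) = c * f u v.
Proof.
by case: f_sym_bilinear => _ lin; have := lin c u v 0; rewrite !addr0 form0r addr0.
Qed.

Lemma formBr u v w : f u (v - w) = f u v - f u w.
Proof. by rewrite formDr -scaleN1r formZr mulN1r. Qed.

Lemma formBl u v w : f (v - w) u = f v u - f w u.
Proof. by rewrite formC formBr !(formC u). Qed.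

Lemma form_sumr u (I : finType) (P : pred I) (c : I -> R) (F : I -> H) :
  f u (\sum_(p | P p) c p *: F p) = \sum_(p | P p) c p * f u (F p).
Proof.
apply: (big_rec2 (fun x y => f u x = y)); first exact: form0r.
by move=> p x y _ <-; rewrite formDr formZr.
Qed.

Lemma form_neq0 v : f v v != 0 -> v != 0.
Proof. by apply: contraNneq => ->; rewrite form0r. Qed.

End SymBilinearForm.

Lemma eigval_gt0 (R : realType) (H : lmodType R) (a m : H -> H -> R)
    (lam : R) (v : H) :
  sym_bilinear m -> pos_def a -> m v v = 1 -> a v v = lam -> 0 < lam.
Proof.
move=> sm pa mvv <-; apply: pa; apply: (form_neq0 sm).
by rewrite mvv oner_neq0.
Qed.

Lemma sub_in_span (R : realType) (H : lmodType R) (n : nat) (U : 'I_n -> H)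
    (P Q : pred 'I_n) (v : H) :
  {subset P <= Q} -> in_span U P v -> in_span U Q v.
Proof.
move=> sPQ [c ->]; exists (fun p => if P p then c p else 0).
rewrite big_mkcond [RHS]big_mkcond; apply: eq_bigr => p _.
case Pp: (P p); last by rewrite scale0r if_same.
by have -> : Q p by apply: sPQ.
Qed.

Lemma in_span_predT (R : realType) (H : lmodType R) (n : nat) (U : 'I_n -> H)
    (P : pred 'I_n) (v : H) :
  in_span U P v -> in_span U predT v.
Proof. exact: sub_in_span. Qed.

Lemma in_spanB (R : realType) (H : lmodType R) (n : nat) (U : 'I_n -> H)
    (P : pred 'I_n) (v w : H) :
  in_span U P v -> in_span U P w -> in_span U P (v - w).
Proof.
move=> [c ->] [d ->]; exists (fun p => c p - d p).
by rewrite -sumrB; apply: eq_bigr => p _; rewrite scalerBl.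
Qed.

Lemma is_proj_nested (R : realType) (H : lmodType R) (f : H -> H -> R)
    (S S' : H -> Prop) (v p p' w : H) :
  sym_bilinear f -> (forall x, S' x -> S x) ->
  is_proj f S v p -> is_proj f S' v p' -> S' w -> f (p - p') w = 0.
Proof.
move=> sf sS'S [_ pP] [_ p'P] S'w.
by rewrite formBl // pP ?p'P ?subrr //; apply: sS'S.
Qed.

Section OrthonormalEigenbasis.
Variables (R : realType) (H : lmodType R) (ah mh : H -> H -> R).
Variables (n : nat) (Lam : 'I_n -> R) (U : 'I_n -> H).
Hypotheses (ah_sym_bilinear : sym_bilinear ah) (mh_sym_bilinear : sym_bilinear mh).
Hypothesis U_orthonormal : forall p q, mh (U p) (U q) = (p == q)%:R.
Hypothesis U_eigen :
  forall p v, in_span U predT v -> ah (U p) v = Lam p * mh (U p) v.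

Lemma in_span_U (P : pred 'I_n) q : P q -> in_span U P (U q).
Proof.
move=> Pq; exists (fun p => (p == q)%:R).
rewrite (bigD1 q) //= eqxx scale1r big1 ?addr0 // => p /andP[_ /negbTE ->].
by rewrite scale0r.
Qed.

Lemma mh_U_sum (P : pred 'I_n) (c : 'I_n -> R) q :
  mh (U q) (\sum_(p < n | P p) c p *: U p) = if P q then c q else 0.
Proof.
rewrite form_sumr //; case: ifP => Pq.
  rewrite (bigD1 q) //= U_orthonormal eqxx mulr1 big1 ?addr0 // => p /andP[_].
  by rewrite U_orthonormal eq_sym => /negbTE ->; rewrite mulr0.
rewrite big1 // => p Pp; rewrite U_orthonormal.
by case: eqP => [qp | _]; [move: Pp; rewrite -qp Pq | rewrite mulr0].
Qed.

Lemma mh_span_U_out (P : pred 'I_n) v q :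
  in_span U P v -> ~~ P q -> mh v (U q) = 0.
Proof.
by case=> c -> /negbTE nPq; rewrite (formC mh_sym_bilinear) mh_U_sum nPq.
Qed.

Lemma in_span_expansion (P : pred 'I_n) v :
  in_span U P v -> v = \sum_(p < n | P p) mh v (U p) *: U p.
Proof.
move=> [c vE]; rewrite {1}vE; apply: eq_bigr => p Pp.
by rewrite vE (formC mh_sym_bilinear) mh_U_sum Pp.
Qed.

Lemma in_span_compl (P : pred 'I_n) v :
  in_span U predT v -> (forall q, P q -> mh v (U q) = 0) ->
  in_span U (predC P) v.
Proof.
move=> /in_span_expansion vE vP0; exists (fun p => mh v (U p)).
rewrite {1}vE (bigID P) /= big1 ?add0r // => p Pp.
by rewrite vP0 // scale0r.
Qed.

Lemma mh_span_compl (P : pred 'I_n) v w :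
  in_span U P v -> in_span U (predC P) w -> mh v w = 0.
Proof.
move=> Pv [d ->]; rewrite form_sumr // big1 // => p /= nPp.
by rewrite (mh_span_U_out Pv nPp) mulr0.
Qed.

Lemma ah_span_compl (P : pred 'I_n) v w :
  in_span U P v -> in_span U (predC P) w -> ah v w = 0.
Proof.
move=> Pv [d ->]; rewrite form_sumr // big1 // => p /= nPp.
rewrite (formC ah_sym_bilinear) U_eigen; last exact: in_span_predT Pv.
by rewrite (formC mh_sym_bilinear) (mh_span_U_out Pv nPp) !mulr0.
Qed.

Lemma Lam_gt0 : pos_def ah -> forall p, 0 < Lam p.
Proof.
move=> pah p; apply: (eigval_gt0 (v := U p) mh_sym_bilinear pah).
  by rewrite U_orthonormal eqxx.
by rewrite U_eigen ?U_orthonormal ?eqxx ?mulr1 //; apply: in_span_U.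
Qed.

Lemma ah_sub_mh_resolvent (P : pred 'I_n) (lam : R) W :
  (forall p, P p -> Lam p != lam) -> in_span U P W ->
  let Z := \sum_(p < n | P p) (lam / (Lam p - lam) * mh W (U p)) *: U p in
  ah W Z - lam * mh W Z = lam * mh W W.
Proof.
move=> Lam_neq PW Z.
have -> : mh W W = \sum_(p < n | P p) mh W (U p) * mh W (U p).
  by rewrite {2}(in_span_expansion PW) form_sumr.
rewrite /Z !form_sumr // !mulr_sumr -sumrB; apply: eq_bigr => p Pp.
rewrite (formC ah_sym_bilinear W) U_eigen; last exact: in_span_predT PW.
rewrite (formC mh_sym_bilinear (U p)).
have Lam_sub_neq0 : Lam p - lam != 0 by rewrite subr_eq0 Lam_neq.
by field; rewrite Lam_sub_neq0.
Qed.

Section ProjectionError.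
Variables (a m : H -> H -> R) (lam : R) (uj : H) (J : pred 'I_n) (Piu Pau : H).
Hypothesis ah_pos_def : pos_def ah.
Hypothesis uj_eigen : forall v, a uj v = lam * m uj v.
Hypothesis Piu_proj : is_proj ah (in_span U predT) uj Piu.
Hypothesis Pau_proj : is_proj ah (in_span U J) uj Pau.

Lemma proj_diff_in_span_compl : in_span U (predC J) (Piu - Pau).
Proof.
have [PiuV _] := Piu_proj; have [PauJ _] := Pau_proj.
have WV : in_span U predT (Piu - Pau).
  by apply: in_spanB => //; apply: in_span_predT PauJ.
apply: (in_span_compl WV) => q Jq.
have ahW0 : ah (Piu - Pau) (U q) = 0.
  apply: (is_proj_nested ah_sym_bilinear _ Piu_proj Pau_proj (in_span_U Jq)).
  exact: in_span_predT.
move: ahW0; rewrite (formC ah_sym_bilinear) U_eigen // => /eqP.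
rewrite mulf_eq0 (gt_eqF (Lam_gt0 ah_pos_def q)).
by rewrite (formC mh_sym_bilinear) => /eqP.
Qed.

Lemma ah_error_identity (W := Piu - Pau) :
  ah W W = lam * mh (uj - Piu) W + lam * mh W W
           + lam * (m uj W - mh uj W) + (ah uj W - a uj W).
Proof.
have [PiuV Piu_ah] := Piu_proj; have [PauJ _] := Pau_proj.
have WJc : in_span U (predC J) W := proj_diff_in_span_compl.
have ahWW : ah W W = ah uj W.
  rewrite {1}/W (formBl ah_sym_bilinear) (ah_span_compl PauJ WJc) subr0.
  by apply: Piu_ah; apply: in_span_predT WJc.
have mhWW : mh W W = mh Piu W.
  by rewrite {1}/W (formBl mh_sym_bilinear) (mh_span_compl PauJ WJc) subr0.
rewrite ahWW (formBl mh_sym_bilinear W uj) uj_eigen mhWW; ring.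
Qed.

Hypothesis lam_neq0 : lam != 0.
Hypothesis Lam_neq : forall p, p \notin J -> Lam p != lam.

Lemma mh_error_identity (W := Piu - Pau) :
  let Z := \sum_(p < n | p \notin J) (lam / (Lam p - lam) * mh W (U p)) *: U p in
  mh W W = mh (uj - Piu) Z + (m uj Z - mh uj Z) + lam^-1 * (ah uj Z - a uj Z).
Proof.
move=> Z; have [PiuV Piu_ah] := Piu_proj; have [PauJ _] := Pau_proj.
have WJc : in_span U (predC J) W := proj_diff_in_span_compl.
have ZJc : in_span U (predC J) Z by eexists.
have resolvent : ah W Z - lam * mh W Z = lam * mh W W :=
  ah_sub_mh_resolvent Lam_neq WJc.
have ahZ : ah uj Z = ah W Z.
  rewrite -Piu_ah; last exact: in_span_predT ZJc.
  by rewrite /W (formBl ah_sym_bilinear) (ah_span_compl PauJ ZJc) subr0.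
have mhZ : mh Piu Z = mh W Z.
  by rewrite /W (formBl mh_sym_bilinear) (mh_span_compl PauJ ZJc) subr0.
rewrite (formBl mh_sym_bilinear Z uj) uj_eigen ahZ mhZ.
have -> : ah W Z = lam * mh W W + lam * mh W Z by rewrite -resolvent; ring.
by field.
Qed.

End ProjectionError.

End OrthonormalEigenbasis.

Theorem mainTheorem4 (R : realType) (H : lmodType R)
  (a m ah mh : H -> H -> R)
  (* exact eigenpairs (paper indices >= 1) *)
  (lam : nat -> R) (u : nat -> H)
  (* discrete eigenpairs, lifted: U p = U_{p+1}^l, Lam p = Lambda_{p+1} *)
  (n : nat) (Lam : 'I_n -> R) (U : 'I_n -> H)
  (i N j : nat) (Piu Pau : H) :
  sym_bilinear a -> sym_bilinear m -> sym_bilinear ah -> sym_bilinear mh ->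
  pos_def a -> pos_def m -> pos_def ah -> pos_def mh ->
  (* continuous eigenproblem *)
  (forall k v, a (u k) v = lam k * m (u k) v) ->
  (forall k l, m (u k) (u l) = (k == l)%:R) ->
  (forall k l, (1 <= k <= l)%N -> lam k <= lam l) ->
  (* lambda_i of multiplicity N, J = {i,...,i+N-1} *)
  (1 <= i)%N -> (1 <= N)%N ->
  (forall k, (i <= k < i + N)%N -> lam k = lam i) ->
  ((1 < i)%N -> lam i.-1 < lam i) -> lam i < lam (i + N) ->
  (* discrete eigenproblem on V_h = span U, (U p) m_h-orthonormal basis *)
  (i + N - 1 <= n)%N ->
  (forall p q, mh (U p) (U q) = (p == q)%:R) ->
  (forall p v, in_span U predT v -> ah (U p) v = Lam p * mh (U p) v) ->
  (forall p q : 'I_n, (p <= q)%N -> Lam p <= Lam q) ->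
  (* the statement *)
  (i <= j < i + N)%N ->
  (forall p, p \notin Jd n i N -> Lam p != lam i) ->
  is_proj ah (in_span U predT) (u j) Piu ->
  is_proj ah (in_span U (Jd n i N)) (u j) Pau ->
  let W := Piu - Pau in
  let beta := fun p => mh W (U p) in
  let Z := \sum_(p < n | p \notin Jd n i N)
             (lam i / (Lam p - lam i) * beta p) *: U p in
  mh W W = mh (u j - Piu) Z + (m (u j) Z - mh (u j) Z)
           + (lam i)^-1 * (ah (u j) Z - a (u j) Z)
  /\
  ah W W = lam i * mh (u j - Piu) W + lam i * mh W W
           + lam i * (m (u j) W - mh (u j) W) + (ah (u j) W - a (u j) W).
Proof.
move=> _ m_sym ah_sym mh_sym a_pos _ ah_pos _ u_eigen u_orthonormal _ _ _ lam_J.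
move=> _ _ _ U_orthonormal U_eigen _ jJ Lam_neq Piu_proj Pau_proj W beta Z.
have lam_j : lam j = lam i by apply: lam_J.
have lam_i_gt0 : 0 < lam i.
  apply: (eigval_gt0 m_sym a_pos (v := u i)); first by rewrite u_orthonormal eqxx.
  by rewrite u_eigen u_orthonormal eqxx mulr1.
have uj_eigen v : a (u j) v = lam i * m (u j) v by rewrite u_eigen lam_j.
split.
- exact: (mh_error_identity ah_sym mh_sym U_orthonormal U_eigen ah_pos uj_eigen
    Piu_proj Pau_proj (lt0r_neq0 lam_i_gt0) Lam_neq).
- exact: (ah_error_identity ah_sym mh_sym U_orthonormal U_eigen ah_pos uj_eigen
    Piu_proj Pau_proj).
Qed.
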